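(* For every triple $(u,\lambda,v)\in\mathbb R^n\times\mathcal Q^*\times\mathbb R^n$ one has $\rho(u,\lambda,v)\ge0$. Moreover, whenever $\rho(u,\lambda,v)$ is finite, the infimum defining $\rho(u,\lambda,v)$ is attained.
   Context: Let $n,m\ge1$, $\mathcal Q:=\{(q_0,q_r)\in\mathbb R\times\mathbb R^m:\|q_r\|\le q_0\}$ and $\mathcal Q^*:=\{(q_0,q_r):\|q_r\|\le-q_0\}$. Let $g=(g_0,g_r):\mathbb R^n\to\mathbb R\times\mathbb R^m$ be $C^2$-smooth around $\bar x$; $\nabla g(\bar x)$ is its Jacobian and $\nabla^2 g(\bar x)(v,u)\in\mathbb R^{1+m}$ is the vector with components $v^T\nabla^2 g_i(\bar x)u$. The infimum function is $$\rho(u,\lambda,v):=\inf_{z\in\mathbb R^n}\Big\{-\lambda_0\Big(\|\nabla g_r(\bar x)z+\nabla^2 g_r(\bar x)(v,u)\|^2-\big(\nabla g_0(\bar x)z+\nabla^2 g_0(\bar x)(v,u)\big)^2\Big)\;\Big|\;\langle\lambda,\nabla g(\bar x)z+\nabla^2 g(\bar x)(v,u)\rangle=0\Big\},$$ with $\rho(u,\lambda,v):=+\infty$ if the constraint set is empty. *)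

From HB Require Import structures.
From mathcomp Require Import all_boot all_order all_algebra.
Set Implicit Arguments. Unset Strict Implicit. Unset Printing Implicit Defensive.
Import Order.TTheory GRing.Theory Num.Theory.
Local Open Scope ring_scope.

Section Rho.
Variable R : rcfType.

Definition enorm (m : nat) (x : 'cV[R]_m) : R := Num.sqrt (\sum_(i < m) x i 0 ^+ 2).

(* lambda = (lam0, lamr) in Q^* := {(q0,qr) : ||qr|| <= -q0} *)
Definition inQstar (m : nat) (lam0 : R) (lamr : 'cV[R]_m) : Prop :=
  enorm lamr <= - lam0.

(* v^T H u : the component of nabla^2 g_i(xbar)(v,u) given the Hessian H *)
Definition hess_term (n : nat) (H : 'M[R]_n) (v u : 'cV[R]_n) : R :=
  (v^T *m H *m u) 0 0.

(* Data: Jacobian rows J0 = nabla g_0(xbar), Jr = nabla g_r(xbar) (m x n);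
   Hessians H0 = nabla^2 g_0(xbar), Hr i = nabla^2 (g_r)_i(xbar). *)
Definition y0 (n : nat) (J0 : 'rV[R]_n) (H0 : 'M[R]_n) (u v : 'cV[R]_n)
  (z : 'cV[R]_n) : R := (J0 *m z) 0 0 + hess_term H0 v u.
Definition yr (n m : nat) (Jr : 'M[R]_(m, n)) (Hr : 'I_m -> 'M[R]_n) (u v : 'cV[R]_n)
  (z : 'cV[R]_n) : 'cV[R]_m := Jr *m z + \col_i hess_term (Hr i) v u.

Definition rho_feasible (n m : nat) (J0 : 'rV[R]_n) (Jr : 'M[R]_(m, n))
  (H0 : 'M[R]_n) (Hr : 'I_m -> 'M[R]_n) (u : 'cV[R]_n) (lam0 : R) (lamr : 'cV[R]_m)
  (v : 'cV[R]_n) (z : 'cV[R]_n) : Prop :=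
  lam0 * y0 J0 H0 u v z + \sum_(i < m) lamr i 0 * yr Jr Hr u v z i 0 = 0.

Definition rho_obj (n m : nat) (J0 : 'rV[R]_n) (Jr : 'M[R]_(m, n))
  (H0 : 'M[R]_n) (Hr : 'I_m -> 'M[R]_n) (u : 'cV[R]_n) (lam0 : R) (lamr : 'cV[R]_m)
  (v : 'cV[R]_n) (z : 'cV[R]_n) : R :=
  - lam0 * (enorm (yr Jr Hr u v z) ^+ 2 - y0 J0 H0 u v z ^+ 2).

End Rho.

Inductive ext (R : Type) := EFin of R | EPInf | ENInf.
Arguments EPInf {R}. Arguments ENInf {R}.

Definition ext_le (R : rcfType) (a b : ext R) : Prop :=
  match a, b with
  | _, EPInf => True
  | ENInf, _ => True
  | EFin x, EFin y => x <= y
  | _, _ => False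
  end.

(* is_inf S f e : e is the infimum (in the extended reals) of f over the set S,
   with the convention inf of the empty set = +oo. *)
Definition is_inf (T : Type) (R : rcfType) (S : T -> Prop) (f : T -> R) (e : ext R) : Prop :=
  match e with
  | EPInf => ~ (exists z, S z)
  | ENInf => (exists z, S z) /\ (forall r : R, exists z, S z /\ f z < r)
  | EFin r => (forall z, S z -> r <= f z) /\
              (forall r' : R, (forall z, S z -> r' <= f z) -> r' <= r)
  end.

Definition rho_is (R : rcfType) (n m : nat) (J0 : 'rV[R]_n) (Jr : 'M[R]_(m, n))
  (H0 : 'M[R]_n) (Hr : 'I_m -> 'M[R]_n) (u : 'cV[R]_n) (lam0 : R) (lamr : 'cV[R]_m)
  (v : 'cV[R]_n) (e : ext R) : Prop :=
  is_inf (rho_feasible J0 Jr H0 Hr u lam0 lamr v) (rho_obj J0 Jr H0 Hr u lam0 lamr v) e.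

From Stdlib Require Import Classical.
From HB Require Import structures.
From mathcomp Require Import all_boot all_order all_algebra ring.
Import Order.TTheory GRing.Theory Num.Theory.
Set Implicit Arguments. Unset Strict Implicit. Unset Printing Implicit Defensive.
Local Open Scope ring_scope.

(* Since lam0 <= -||lamr||, the constraint forces y0 = <mu, yr> with
   mu = lamr / (-lam0) in the closed unit ball, so on the feasible set the
   objective is -lam0 (||yr||^2 - <mu, yr>^2), a nonnegative multiple of the
   squared norm of an affine function of z.  Minimizing such a squared norm
   over the affine feasible set is a linear least-squares problem, whose
   minimum is attained (normal equations). *)

Section SquaredNorm.
Variable R : realFieldType.

Definition sqnorm k (w : 'cV[R]_k) : R := (w^T *m w) 0 0.

Lemma sqnormE k (w : 'cV[R]_k) : sqnorm w = \sum_i w i 0 ^+ 2.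
Proof. by rewrite /sqnorm mxE; apply: eq_bigr => i _; rewrite mxE expr2. Qed.

Lemma sqnorm_ge0 k (w : 'cV[R]_k) : 0 <= sqnorm w.
Proof. by rewrite sqnormE; apply: sumr_ge0 => i _; rewrite sqr_ge0. Qed.

Lemma sqnorm_eq0 k (w : 'cV[R]_k) : sqnorm w = 0 -> w = 0.
Proof.
rewrite sqnormE => /eqP; rewrite psumr_eq0; last by move=> i _; rewrite sqr_ge0.
move/allP => w0; apply/matrixP => i j; rewrite (ord1 j) mxE.
by have := w0 i (mem_index_enum _); rewrite /= sqrf_eq0 => /eqP.
Qed.

Lemma sqnormD k (p q : 'cV[R]_k) :
  sqnorm (p + q) = sqnorm p + 2 * (p^T *m q) 0 0 + sqnorm q.
Proof.
rewrite /sqnorm [(p + q)^T]linearD /= mulmxDl !mulmxDr !mxE.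
have -> : \sum_j q^T 0 j * p j 0 = \sum_j p^T 0 j * q j 0.
  by apply: eq_bigr => j _; rewrite !mxE mulrC.
ring.
Qed.

Lemma sqnormZ k (c : R) (w : 'cV[R]_k) : sqnorm (c *: w) = c ^+ 2 * sqnorm w.
Proof.
by rewrite /sqnorm [(c *: w)^T]linearZ /= -scalemxAl -scalemxAr !mxE mulrA expr2.
Qed.

Lemma sqnorm_col_mx k l (p : 'cV[R]_k) (q : 'cV[R]_l) :
  sqnorm (col_mx p q) = sqnorm p + sqnorm q.
Proof. by rewrite /sqnorm tr_col_mx mul_row_col mxE. Qed.

Lemma trmx_mul_self_eq0 k n (M : 'M[R]_(k, n)) : M^T *m M = 0 -> M = 0.
Proof.
move=> MtM0; apply/matrixP => i j.
have : sqnorm (col j M) = 0.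
  have -> : sqnorm (col j M) = (M^T *m M) j j.
    by rewrite /sqnorm !mxE; apply: eq_bigr => l _; rewrite !mxE.
  by rewrite MtM0 mxE.
by move/sqnorm_eq0/matrixP/(_ i 0); rewrite !mxE.
Qed.

(* A solution [x0 = - D^T] of the normal equations [B^T B x = - B^T b] makes the
   residual orthogonal to the range of [B]; solvability holds because
   [B^T] and [B^T B] have the same column space. *)
Lemma least_squares k n (B : 'M[R]_(k, n)) (b : 'cV[R]_k) :
  exists x0, forall x, sqnorm (B *m x0 + b) <= sqnorm (B *m x + b).
Proof.
set N := B^T *m B.
have B_coker : B *m cokermx N = 0.
  apply: trmx_mul_self_eq0; rewrite trmx_mul -mulmxA (mulmxA B^T) -/N.
  by rewrite mulmx_coker mulmx0.
have : (b^T *m B <= N)%MS by rewrite submxE -mulmxA B_coker mulmx0.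
case/submxP => D bB.
exists (- D^T) => x.
have residual_ortho : B^T *m (B *m - D^T + b) = 0.
  rewrite mulmxDr mulmxA -/N mulmxN.
  have -> : N *m D^T = (D *m N)^T by rewrite trmx_mul /N trmx_mul trmxK.
  by rewrite -bB trmx_mul trmxK addNr.
have -> : B *m x + b = B *m (x + D^T) + (B *m - D^T + b).
  by rewrite mulmxDr mulmxN addrA addrK.
rewrite (sqnormD (B *m (x + D^T))) -[B *m (x + D^T)]trmxK trmx_mul trmxK.
by rewrite -mulmxA residual_ortho mulmx0 mxE mulr0 addr0 lerDr sqnorm_ge0.
Qed.

(* The solutions of [C z = d] are [z1 + K x], with [K] spanning the kernel of [C]. *)
Lemma affine_least_squares p k n (C : 'M[R]_(p, n)) (d : 'cV[R]_p)
    (B : 'M[R]_(k, n)) (b : 'cV[R]_k) (z1 : 'cV[R]_n) :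
  C *m z1 = d ->
  exists2 zs, C *m zs = d &
    forall z, C *m z = d -> sqnorm (B *m zs + b) <= sqnorm (B *m z + b).
Proof.
move=> Cz1; set K := (kermx C^T)^T.
have CK : C *m K = 0 by rewrite -[C]trmxK -trmx_mul mulmx_ker trmx0.
have BK x : B *m (z1 + K *m x) + b = B *m K *m x + (B *m z1 + b).
  by rewrite mulmxDr mulmxA addrAC addrC.
have [x0 x0_min] := least_squares (B *m K) (B *m z1 + b).
exists (z1 + K *m x0); first by rewrite mulmxDr mulmxA CK mul0mx addr0.
move=> z Cz.
have : ((z - z1)^T <= kermx C^T)%MS.
  by apply/sub_kermxP; rewrite -trmx_mul mulmxBr Cz Cz1 subrr trmx0.
case/submxP => x zx.
have -> : z = z1 + K *m x^T by rewrite /K -trmx_mul -zx trmxK addrC subrK.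
by rewrite !BK.
Qed.

End SquaredNorm.

Lemma enorm_sqr (R : rcfType) k (x : 'cV[R]_k) : enorm x ^+ 2 = sqnorm x.
Proof. by rewrite /enorm sqr_sqrtr -sqnormE ?sqnorm_ge0. Qed.

Definition dot_defect_mx (R : rcfType) k (mu : 'cV[R]_k) : 'M[R]_(k + 1, k) :=
  col_mx (1%:M - mu *m mu^T) (Num.sqrt (1 - sqnorm mu) *: mu^T).

(* [Y = (Y - <mu,Y> mu) + <mu,Y> mu], and the cross term contributes
   [<mu,Y>^2 (||mu||^2 - 2)], which the second block compensates. *)
Lemma sqnorm_dot_defect (R : rcfType) k (mu Y : 'cV[R]_k) :
  sqnorm mu <= 1 ->
  sqnorm Y - (mu^T *m Y) 0 0 ^+ 2 = sqnorm (dot_defect_mx mu *m Y).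
Proof.
move=> mu_le1; set c := (mu^T *m Y) 0 0.
have muY : mu^T *m Y = c%:M by rewrite [LHS]mx11_scalar.
rewrite mul_col_mx sqnorm_col_mx mulmxBl mul1mx -mulmxA muY mul_mx_scalar.
rewrite -scaleNr sqnormD sqnormZ sqrrN -scalemxAr -scalemxAl muY sqnormZ.
rewrite [X in 2 * X]mxE.
have -> : (Y^T *m mu) 0 0 = c by rewrite -[Y^T *m mu]trmxK trmx_mul trmxK mxE.
rewrite (sqnormE c%:M) big_ord1 !mxE /= mulr1n sqr_sqrtr ?subr_ge0 //.
ring.
Qed.

Section RhoProblem.
Variables (R : rcfType) (n m : nat).
Variables (J0 : 'rV[R]_n) (Jr : 'M[R]_(m, n)) (H0 : 'M[R]_n) (Hr : 'I_m -> 'M[R]_n).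
Variables (u : 'cV[R]_n) (lam0 : R) (lamr : 'cV[R]_m) (v : 'cV[R]_n).

Let feasible := rho_feasible J0 Jr H0 Hr u lam0 lamr v.
Let obj := rho_obj J0 Jr H0 Hr u lam0 lamr v.
Let h := \col_i hess_term (Hr i) v u.
Let mu := (- lam0)^-1 *: lamr.
Let C := lam0 *: J0 + lamr^T *m Jr.

Lemma rho_feasibleE z :
  feasible z <-> (C *m z) 0 0
                 = - (lam0 * hess_term H0 v u + (lamr^T *m h) 0 0).
Proof.
have sum_yr : \sum_(i < m) lamr i 0 * yr Jr Hr u v z i 0
              = (lamr^T *m (Jr *m z)) 0 0 + (lamr^T *m h) 0 0.
  by rewrite /yr !mxE -big_split; apply: eq_bigr => i _; rewrite !mxE mulrDr.
rewrite /feasible /rho_feasible sum_yr /y0 mulmxDl -scalemxAl -mulmxA.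
rewrite 2![in X in _ <-> X]mxE; split=> eq0.
  by apply/eqP; rewrite -subr_eq0 -eq0; apply/eqP; ring.
by rewrite mulrDr addrACA eq0 addNr.
Qed.

Lemma rho_feasible_affine z1 z : feasible z1 -> (feasible z <-> C *m z = C *m z1).
Proof.
move=> /rho_feasibleE Fz1; split=> [/rho_feasibleE Fz | Cz].
  by rewrite [LHS]mx11_scalar [RHS]mx11_scalar Fz Fz1.
by apply/rho_feasibleE; rewrite Cz.
Qed.

Hypothesis hlam : inQstar lam0 lamr.

Lemma oppr_lam0_ge0 : 0 <= - lam0.
Proof. exact: le_trans (sqrtr_ge0 _) hlam. Qed.

Lemma sqnorm_mu_le1 : sqnorm mu <= 1.
Proof.
have [lam0_0|lam0_neq0] := eqVneq lam0 0.
  by rewrite /mu lam0_0 oppr0 invr0 scale0r /sqnorm mulmx0 mxE.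
have a_gt0 : 0 < - lam0 by rewrite lt_def oppr_eq0 lam0_neq0 oppr_lam0_ge0.
rewrite /mu sqnormZ -enorm_sqr exprVn mulrC ler_pdivrMr ?exprn_gt0 // mul1r.
by rewrite !expr2 ler_pM ?sqrtr_ge0.
Qed.

(* Feasibility reads [- lam0 * (y0 - <mu, yr>) = 0]. *)
Lemma rho_obj_feasible z : feasible z ->
  obj z = - lam0 * (sqnorm (yr Jr Hr u v z) - (mu^T *m yr Jr Hr u v z) 0 0 ^+ 2).
Proof.
move=> Fz; rewrite /obj /rho_obj enorm_sqr.
have [lam0_0|lam0_neq0] := eqVneq lam0 0; first by rewrite lam0_0 oppr0 !mul0r.
suff -> : y0 J0 H0 u v z = (mu^T *m yr Jr Hr u v z) 0 0 by [].
have : lam0 * (y0 J0 H0 u v z - (mu^T *m yr Jr Hr u v z) 0 0) = 0.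
  rewrite -[RHS]Fz /mu linearZ /= -scalemxAl mxE.
  rewrite mulrBr invrN mulNr mulrN opprK mulrA mulfV // mul1r mxE.
  by congr (_ + _); apply: eq_bigr => i _; rewrite mxE.
by move/eqP; rewrite mulf_eq0 (negbTE lam0_neq0) subr_eq0 => /eqP.
Qed.

Lemma rho_obj_least_squares z : feasible z ->
  obj z = - lam0 * sqnorm ((dot_defect_mx mu *m Jr) *m z + dot_defect_mx mu *m h).
Proof.
move=> Fz; rewrite rho_obj_feasible // sqnorm_dot_defect ?sqnorm_mu_le1 //.
by rewrite /yr mulmxDr mulmxA.
Qed.

Lemma rho_obj_ge0 z : feasible z -> 0 <= obj z.
Proof.
by move=> Fz; rewrite rho_obj_least_squares // mulr_ge0 ?oppr_lam0_ge0 ?sqnorm_ge0.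
Qed.

Lemma rho_argmin z1 : feasible z1 ->
  exists2 zs, feasible zs & forall z, feasible z -> obj zs <= obj z.
Proof.
move=> Fz1.
have [zs Czs zs_min] :=
  affine_least_squares (dot_defect_mx mu *m Jr) (dot_defect_mx mu *m h) (erefl (C *m z1)).
have Fzs : feasible zs by apply/(rho_feasible_affine _ Fz1).
exists zs => // z Fz; rewrite !rho_obj_least_squares // ler_wpM2l ?oppr_lam0_ge0 //.
by apply/zs_min/(rho_feasible_affine _ Fz1).
Qed.

End RhoProblem.

Section Infimum.
Variables (T : Type) (R : rcfType) (S : T -> Prop) (f : T -> R).

Lemma is_inf_ge (c : R) e :
  (forall z, S z -> c <= f z) -> is_inf S f e -> ext_le (EFin c) e.
Proof.
move=> lb; case: e => [r [_ glb]|//|[[z1 Sz1] unbounded]] /=; first exact: glb.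
by have [z [Sz]] := unbounded c; rewrite ltNge lb.
Qed.

Lemma is_inf_fin_nonempty r : is_inf S f (EFin r) -> exists z, S z.
Proof.
case=> _ glb; apply: NNPP => empty.
have := glb (r + 1) (fun z Sz => False_ind _ (empty (ex_intro _ z Sz))).
by rewrite gerDl ler10.
Qed.

Lemma is_inf_attained r zs : is_inf S f (EFin r) -> S zs ->
  (forall z, S z -> f zs <= f z) -> f zs = r.
Proof. by case=> lb glb Szs zs_min; apply/eqP; rewrite eq_le glb ?lb. Qed.

End Infimum.

Theorem lemma4p4 (R : rcfType) (n m : nat) (hn : (1 <= n)%N) (hm : (1 <= m)%N)
  (J0 : 'rV[R]_n) (Jr : 'M[R]_(m, n)) (H0 : 'M[R]_n) (Hr : 'I_m -> 'M[R]_n)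
  (hH0 : H0^T = H0) (hHr : forall i, (Hr i)^T = Hr i)
  (u : 'cV[R]_n) (lam0 : R) (lamr : 'cV[R]_m) (v : 'cV[R]_n)
  (hlam : inQstar lam0 lamr) (e : ext R)
  (he : rho_is J0 Jr H0 Hr u lam0 lamr v e) :
  ext_le (EFin 0) e /\
  (forall r : R, e = EFin r ->
     exists z : 'cV[R]_n, rho_feasible J0 Jr H0 Hr u lam0 lamr v z /\
                          rho_obj J0 Jr H0 Hr u lam0 lamr v z = r).
Proof.
split; first by apply: is_inf_ge he => z; apply: rho_obj_ge0.
move=> r er; rewrite er in he.
have [z1 Fz1] := is_inf_fin_nonempty he.
have [zs Fzs zs_min] := rho_argmin hlam Fz1.
by exists zs; split => //; apply: is_inf_attained he Fzs zs_min.
Qed.
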